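(* Let $\mathcal{K}: C^0[0,1]\to C^0[0,1]$ be the backstepping kernel operator, i.e. $k=\mathcal{K}(\beta)$ is the continuous solution of $k(x) = -\beta(x) + \int_0^x \beta(x-y)k(y)\,dy$ for $x\in[0,1]$. Then for any $B>0$ and any pair $\beta_1,\beta_2\in C^0[0,1]$ with $\|\beta_1\|_\infty\le B$ and $\|\beta_2\|_\infty\le B$, $$\|\mathcal{K}(\beta_1)-\mathcal{K}(\beta_2)\|_\infty \le e^{3B}\,\|\beta_1-\beta_2\|_\infty .$$
   Context: $\|\cdot\|_\infty$ denotes the supremum norm over $[0,1]$. The convolution is $(a*b)(x)=\int_0^x a(x-y)b(y)\,dy$, so the kernel equation reads $\mathcal{K}(\beta) = -\beta + \beta*\mathcal{K}(\beta)$. *)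

From Stdlib Require Import Reals.
From Coquelicot Require Import Coquelicot.
Open Scope R_scope.

Definition cont01 (f : R -> R) : Prop :=
  forall x, 0 <= x <= 1 ->
    filterlim f (within (fun y => 0 <= y <= 1) (locally x)) (locally (f x)).

(* Supremum norm over [0,1]: the least upper bound of { |f x| : x in [0,1] }.
   For f continuous on [0,1] this is a finite real number. *)
Definition supnorm (f : R -> R) : R :=
  real (Lub_Rbar (fun r => exists x, 0 <= x <= 1 /\ r = Rabs (f x))).

Definition is_kernel (beta k : R -> R) : Prop :=
  cont01 k /\
  forall x, 0 <= x <= 1 ->
    k x = - beta x + RInt (fun y => beta (x - y) * k y) 0 x.

From Stdlib Require Import Reals Lra.
From Coquelicot Require Import Coquelicot.
Open Scope R_scope.

(* Write d = K(beta1) - K(beta2) and D = |beta1 - beta2|_oo. Subtracting the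
   two kernel equations gives, with * the convolution,
     d = -(beta1 - beta2) + (beta1 - beta2) * K(beta1) + beta2 * d,
   hence |d(x)| <= D (1 + |K(beta1)|_oo) + B int_0^x |d|. Gronwall's inequality
   applied to K(beta1) = -beta1 + beta1 * K(beta1) gives |K(beta1)| <= B e^B,
   and applied to d it gives |d| <= D (1 + B e^B) e^B <= D e^(3B). *)

Ltac solve_continuous :=
  repeat match goal with
  | |- filterlim ?f (locally ?x) (locally _) => change (continuous f x)
  | |- continuous (fun _ => ?c) _ => apply continuous_const
  | |- continuous (fun y => y) _ => apply continuous_id
  | |- continuous (fun y => @?f y * @?g y) _ => apply (continuous_mult f g)
  | |- continuous (fun y => @?f y + @?g y) _ => apply (continuous_plus f g)
  | |- continuous (fun y => @?f y - @?g y) _ => apply (continuous_minus f g)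
  | |- continuous (fun y => - @?f y) _ => apply (continuous_opp f)
  | |- continuous (fun y => Rabs (@?f y)) _ => apply (continuous_Rabs_comp f)
  | |- continuous (fun y => exp (@?f y)) _ => apply (continuous_exp_comp f)
  end; auto.

(* Functions on [0,1] are extended to R by composing with the retraction
   clamp01, so that Coquelicot's integration lemmas for functions continuous
   on R apply to the integrands of the kernel equation. *)
Definition clamp01 (x : R) : R := Rmax 0 (Rmin 1 x).

Lemma clamp01_in x : 0 <= clamp01 x <= 1.
Proof. unfold clamp01, Rmax, Rmin; repeat destruct Rle_dec; lra. Qed.

Lemma clamp01_id x : 0 <= x <= 1 -> clamp01 x = x.
Proof. unfold clamp01, Rmax, Rmin; repeat destruct Rle_dec; lra. Qed.

Lemma clamp01_lipschitz a b : Rabs (clamp01 a - clamp01 b) <= Rabs (a - b).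
Proof.
  unfold clamp01, Rmax, Rmin; repeat destruct Rle_dec;
  unfold Rabs; repeat destruct Rcase_abs; lra.
Qed.

Lemma continuous_clamp01_comp f : cont01 f -> forall x, continuous (fun z => f (clamp01 z)) x.
Proof.
  intros Hf x. eapply filterlim_comp; [| apply Hf, clamp01_in].
  intros P [eps HP]. exists eps. intros y Hy. apply HP; [| apply clamp01_in].
  eapply Rle_lt_trans; [apply clamp01_lipschitz | exact Hy].
Qed.

Lemma cont01_minus f g : cont01 f -> cont01 g -> cont01 (fun x => f x - g x).
Proof.
  intros Hf Hg x Hx.
  apply (filterlim_comp_2 f g Rminus (Hf x Hx) (Hg x Hx)).
  apply (filterlim_comp_2 (G := locally (f x)) (H := locally (- g x))
           (fun p : R * R => fst p) (fun p : R * R => - snd p) Rplus).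
  - apply filterlim_fst.
  - eapply filterlim_comp; [apply filterlim_snd | apply (filterlim_opp (V := R_NormedModule))].
  - apply (filterlim_plus (V := R_NormedModule)).
Qed.

Lemma cont01_bounded f : cont01 f -> exists M, forall x, 0 <= x <= 1 -> Rabs (f x) <= M.
Proof.
  intros Hf.
  destruct (continuity_ab_maj (fun z => Rabs (f (clamp01 z))) 0 1) as [c [Hc _]]; [lra | |].
  - intros z _. apply continuity_pt_filterlim.
    apply (continuous_Rabs_comp (fun z => f (clamp01 z))), continuous_clamp01_comp, Hf.
  - exists (Rabs (f (clamp01 c))). intros x Hx. rewrite <- (clamp01_id x Hx). auto.
Qed.

Lemma supnorm_is_lub f M : (forall x, 0 <= x <= 1 -> Rabs (f x) <= M) ->
  is_lub_Rbar (fun r => exists x, 0 <= x <= 1 /\ r = Rabs (f x)) (supnorm f).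
Proof.
  intros HM. unfold supnorm.
  set (S := fun r => exists x, 0 <= x <= 1 /\ r = Rabs (f x)).
  pose proof (Lub_Rbar_correct S) as Hlub.
  assert (Hle : Rbar_le (Lub_Rbar S) M).
  { apply Hlub. intros r [x [Hx ->]]. exact (HM x Hx). }
  assert (Hge : Rbar_le (Rabs (f 0)) (Lub_Rbar S)).
  { apply Hlub. exists 0. split; [lra | reflexivity]. }
  destruct (Lub_Rbar S); easy.
Qed.

Lemma supnorm_le f M : (forall x, 0 <= x <= 1 -> Rabs (f x) <= M) -> supnorm f <= M.
Proof.
  intros HM. apply (proj2 (supnorm_is_lub f M HM) (Finite M)).
  intros r [x [Hx ->]]. exact (HM x Hx).
Qed.

Lemma Rabs_le_supnorm f : cont01 f -> forall x, 0 <= x <= 1 -> Rabs (f x) <= supnorm f.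
Proof.
  intros Hf x Hx. destruct (cont01_bounded f Hf) as [M HM].
  apply (proj1 (supnorm_is_lub f M HM)). now exists x.
Qed.

Lemma supnorm_ge0 f : cont01 f -> 0 <= supnorm f.
Proof.
  intros Hf. eapply Rle_trans; [apply Rabs_pos | apply (Rabs_le_supnorm f Hf 0)]. lra.
Qed.

Lemma ex_RInt_continuous_R (f : R -> R) a b : (forall x, continuous f x) -> ex_RInt f a b.
Proof. intros Hf. apply (ex_RInt_continuous (V := R_CompleteNormedModule)). auto. Qed.

Lemma abs_RInt_le_RInt (F G : R -> R) x : 0 <= x ->
  (forall y, continuous F y) -> (forall y, continuous G y) ->
  (forall y, 0 <= y <= x -> Rabs (F y) <= G y) -> Rabs (RInt F 0 x) <= RInt G 0 x.
Proof.
  intros Hx HF HG HFG.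
  eapply Rle_trans; [apply abs_RInt_le; [exact Hx | now apply ex_RInt_continuous_R] |].
  apply RInt_le; [exact Hx | apply ex_RInt_continuous_R; intros; solve_continuous
                 | now apply ex_RInt_continuous_R |].
  intros y Hy. apply HFG. lra.
Qed.

Lemma RInt_const_plus_scal (h : R -> R) a b x : (forall y, continuous h y) ->
  RInt (fun y => a + b * h y) 0 x = a * x + b * RInt h 0 x :> R.
Proof.
  intros Hh.
  rewrite (RInt_plus (V := R_CompleteNormedModule) (fun _ => a) (fun y => b * h y));
    [| apply ex_RInt_continuous_R; intros; solve_continuous ..].
  rewrite (RInt_const (V := R_CompleteNormedModule)).
  rewrite (RInt_scal (V := R_CompleteNormedModule) h) by now apply ex_RInt_continuous_R.
  unfold plus, scal; simpl; unfold mult; simpl. ring.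
Qed.

Lemma RInt_scal_exp c B x : B <> 0 ->
  RInt (fun y => c * exp (B * y)) 0 x = c * (exp (B * x) - 1) / B.
Proof.
  intros HB. apply is_RInt_unique.
  replace (c * (exp (B * x) - 1) / B) with
    (minus (c * exp (B * x) / B) (c * exp (B * 0) / B))
    by (unfold minus, plus, opp; simpl; rewrite Rmult_0_r, exp_0; field; exact HB).
  apply (is_RInt_derive (fun y => c * exp (B * y) / B)).
  - intros y _. auto_derive; [exact I | field; exact HB].
  - intros y _. solve_continuous.
Qed.

Lemma gronwall (g : R -> R) A B T : 0 < B -> 0 <= T -> (forall x, continuous g x) ->
  (forall x, 0 <= x <= T -> g x <= A + B * RInt g 0 x) ->
  forall x, 0 <= x <= T -> g x <= A * exp (B * x).
Proof.
  intros HB HT Hg Hint.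
  destruct (continuity_ab_maj (fun x => g x * exp (- (B * x))) 0 T) as [c [Hc Hc0T]];
    [exact HT | intros z _; apply continuity_pt_filterlim; solve_continuous |].
  set (S := g c * exp (- (B * c))) in Hc.
  (* S is the least constant with g <= S e^(B.) on [0,T]; the integral
     inequality at the maximiser c forces S <= A. *)
  assert (Hexp : forall y, exp (- (B * y)) * exp (B * y) = 1).
  { intros y. rewrite <- exp_plus, Rplus_opp_l. apply exp_0. }
  assert (HS : forall y, 0 <= y <= T -> g y <= S * exp (B * y)).
  { intros y Hy. replace (g y) with (g y * exp (- (B * y)) * exp (B * y))
      by (rewrite Rmult_assoc, Hexp; ring).
    apply Rmult_le_compat_r; [left; apply exp_pos | exact (Hc y Hy)]. }
  assert (Hgc : g c = S * exp (B * c)) by (unfold S; rewrite Rmult_assoc, Hexp; ring).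
  assert (HI : RInt g 0 c <= S * (exp (B * c) - 1) / B).
  { rewrite <- RInt_scal_exp by lra. apply RInt_le; [lra | now apply ex_RInt_continuous_R
    | apply ex_RInt_continuous_R; intros; solve_continuous |].
    intros y Hy. apply HS. lra. }
  assert (HSA : S <= A).
  { pose proof (Hint c Hc0T) as Hic.
    apply (Rmult_le_compat_l B) in HI; [| lra].
    replace (B * (S * (exp (B * c) - 1) / B)) with (S * exp (B * c) - S) in HI by (field; lra).
    lra. }
  intros x Hx. eapply Rle_trans; [apply HS, Hx |].
  apply Rmult_le_compat_r; [left; apply exp_pos | exact HSA].
Qed.

Lemma is_kernel_clamp01 beta k : is_kernel beta k -> forall x, 0 <= x <= 1 ->
  k x = - beta x + RInt (fun y => beta (clamp01 (x - y)) * k (clamp01 y)) 0 x.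
Proof.
  intros [_ Hk] x Hx. rewrite Hk by exact Hx. f_equal.
  apply RInt_ext. rewrite Rmin_left, Rmax_right by lra.
  intros y Hy. rewrite !clamp01_id by lra. reflexivity.
Qed.

Lemma continuous_clamp01_comp_sub f a : cont01 f ->
  forall y, continuous (fun y => f (clamp01 (a - y))) y.
Proof.
  intros Hf y. apply (continuous_comp (fun y => a - y) (fun z => f (clamp01 z))).
  - solve_continuous.
  - now apply continuous_clamp01_comp.
Qed.

Lemma kernel_bound beta k B : 0 < B -> cont01 beta -> supnorm beta <= B ->
  is_kernel beta k -> forall x, 0 <= x <= 1 -> Rabs (k x) <= B * exp (B * x).
Proof.
  intros HB Hbeta HbetaB Hk.
  assert (Hb : forall z, Rabs (beta (clamp01 z)) <= B).
  { intros z. eapply Rle_trans; [apply Rabs_le_supnorm, clamp01_in |]; assumption. }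
  pose proof (continuous_clamp01_comp_sub beta) as Cb.
  pose proof (continuous_clamp01_comp k (proj1 Hk)) as Ck.
  intros x Hx. rewrite <- (clamp01_id x Hx) at 1. revert x Hx.
  apply (gronwall (fun y => Rabs (k (clamp01 y))) B B 1); [exact HB | lra | intros; solve_continuous |].
  intros x Hx. rewrite (clamp01_id x Hx), (is_kernel_clamp01 beta k Hk x Hx).
  eapply Rle_trans; [apply Rabs_triang |]. rewrite Rabs_Ropp.
  apply Rplus_le_compat; [rewrite <- (clamp01_id x Hx); apply Hb |].
  assert (HI : RInt (fun y => 0 + B * Rabs (k (clamp01 y))) 0 x
                = B * RInt (fun y => Rabs (k (clamp01 y))) 0 x :> R)
    by (rewrite RInt_const_plus_scal; [ring | intros; solve_continuous]).
  rewrite <- HI.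
  apply abs_RInt_le_RInt; [lra | intros; solve_continuous .. |].
  intros y _. rewrite Rplus_0_l, Rabs_mult.
  apply Rmult_le_compat_r; [apply Rabs_pos | apply Hb].
Qed.

Section KernelDifference.

Variables (beta1 beta2 k1 k2 : R -> R) (B K : R).
Hypotheses (Hb1 : cont01 beta1) (Hb2 : cont01 beta2) (Hb2B : supnorm beta2 <= B)
  (Hk1 : is_kernel beta1 k1) (Hk2 : is_kernel beta2 k2)
  (Hk1K : forall x, 0 <= x <= 1 -> Rabs (k1 x) <= K).

Lemma kernel_sub_integral_le x : 0 <= x <= 1 ->
  Rabs (k1 x - k2 x) <= supnorm (fun x => beta1 x - beta2 x) * (1 + K)
                        + B * RInt (fun y => Rabs (k1 (clamp01 y) - k2 (clamp01 y))) 0 x.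
Proof.
  intros Hx.
  set (D := supnorm (fun x => beta1 x - beta2 x)).
  assert (HD : forall z, Rabs (beta1 (clamp01 z) - beta2 (clamp01 z)) <= D).
  { intros z. apply (Rabs_le_supnorm (fun x => beta1 x - beta2 x)), clamp01_in.
    now apply cont01_minus. }
  assert (D0 : 0 <= D) by now apply supnorm_ge0, cont01_minus.
  assert (HB2 : forall z, Rabs (beta2 (clamp01 z)) <= B).
  { intros z. eapply Rle_trans; [apply Rabs_le_supnorm, clamp01_in |]; assumption. }
  assert (HK : forall z, Rabs (k1 (clamp01 z)) <= K) by (intros z; apply Hk1K, clamp01_in).
  assert (K0 : 0 <= K) by (eapply Rle_trans; [apply Rabs_pos | apply (HK 0)]).
  pose proof (continuous_clamp01_comp_sub beta1) as Cb1.
  pose proof (continuous_clamp01_comp_sub beta2) as Cb2.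
  pose proof (continuous_clamp01_comp k1 (proj1 Hk1)) as Ck1.
  pose proof (continuous_clamp01_comp k2 (proj1 Hk2)) as Ck2.
  rewrite (is_kernel_clamp01 _ _ Hk1 x Hx), (is_kernel_clamp01 _ _ Hk2 x Hx).
  set (F1 := fun y => beta1 (clamp01 (x - y)) * k1 (clamp01 y)).
  set (F2 := fun y => beta2 (clamp01 (x - y)) * k2 (clamp01 y)).
  assert (HF : RInt F1 0 x - RInt F2 0 x = RInt (fun y => F1 y - F2 y) 0 x :> R).
  { symmetry. apply (RInt_minus (V := R_CompleteNormedModule));
      apply ex_RInt_continuous_R; intros; unfold F1, F2; solve_continuous. }
  assert (Hpt : forall y, Rabs (F1 y - F2 y)
                          <= D * K + B * Rabs (k1 (clamp01 y) - k2 (clamp01 y))).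
  { intros y. unfold F1, F2.
    replace (beta1 (clamp01 (x - y)) * k1 (clamp01 y) - beta2 (clamp01 (x - y)) * k2 (clamp01 y))
      with ((beta1 (clamp01 (x - y)) - beta2 (clamp01 (x - y))) * k1 (clamp01 y)
            + beta2 (clamp01 (x - y)) * (k1 (clamp01 y) - k2 (clamp01 y))) by ring.
    eapply Rle_trans; [apply Rabs_triang |]. rewrite !Rabs_mult.
    apply Rplus_le_compat; apply Rmult_le_compat; auto using Rabs_pos, Rle_refl. }
  assert (Hint : Rabs (RInt (fun y => F1 y - F2 y) 0 x)
            <= D * K * x + B * RInt (fun y => Rabs (k1 (clamp01 y) - k2 (clamp01 y))) 0 x).
  { rewrite <- RInt_const_plus_scal by (intros; solve_continuous).
    apply abs_RInt_le_RInt; [lra | intros; unfold F1, F2; solve_continuous .. | auto]. }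
  replace (- beta1 x + RInt F1 0 x - (- beta2 x + RInt F2 0 x))
    with (- (beta1 x - beta2 x) + RInt (fun y => F1 y - F2 y) 0 x) by (rewrite <- HF; ring).
  eapply Rle_trans; [apply Rabs_triang |]. rewrite Rabs_Ropp.
  assert (Hx0 : Rabs (beta1 x - beta2 x) <= D) by (rewrite <- (clamp01_id x Hx); apply HD).
  assert (D * K * x <= D * K) by (pose proof (Rmult_le_pos _ _ D0 K0); nra).
  lra.
Qed.

Lemma kernel_sub_bound : 0 < B -> forall x, 0 <= x <= 1 ->
  Rabs (k1 x - k2 x) <= supnorm (fun x => beta1 x - beta2 x) * (1 + K) * exp (B * x).
Proof.
  intros HB x Hx.
  replace (k1 x - k2 x) with (k1 (clamp01 x) - k2 (clamp01 x)) by now rewrite clamp01_id.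
  revert x Hx.
  pose proof (continuous_clamp01_comp k1 (proj1 Hk1)) as Ck1.
  pose proof (continuous_clamp01_comp k2 (proj1 Hk2)) as Ck2.
  apply (gronwall (fun y => Rabs (k1 (clamp01 y) - k2 (clamp01 y))) _ B 1);
    [exact HB | lra | intros; solve_continuous |].
  intros x Hx. rewrite (clamp01_id x Hx). now apply kernel_sub_integral_le.
Qed.

End KernelDifference.

Lemma exp_le_of_le x y : x <= y -> exp x <= exp y.
Proof.
  intros [Hlt | ->]; [left; now apply exp_increasing | apply Rle_refl].
Qed.

Lemma exp_growth_le B x : 0 <= B -> 0 <= x <= 1 ->
  (1 + B * exp B) * exp (B * x) <= exp (3 * B).
Proof.
  intros HB Hx.
  assert (E3 : exp (3 * B) = exp B * exp B * exp B) by (rewrite <- !exp_plus; f_equal; ring).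
  assert (HBx : exp (B * x) <= exp B) by (apply exp_le_of_le; nra).
  pose proof (exp_ineq1_le B). pose proof (exp_pos (B * x)).
  (* 1 + B e^B <= (1 + B) e^B <= e^B e^B *)
  assert (H1 : 1 + B * exp B <= exp B * exp B) by nra.
  rewrite E3. apply Rmult_le_compat; nra.
Qed.

Theorem lemma1 :
  forall (B : R) (beta1 beta2 k1 k2 : R -> R),
    0 < B ->
    cont01 beta1 -> cont01 beta2 ->
    supnorm beta1 <= B -> supnorm beta2 <= B ->
    is_kernel beta1 k1 -> is_kernel beta2 k2 ->
    supnorm (fun x => k1 x - k2 x) <= exp (3 * B) * supnorm (fun x => beta1 x - beta2 x).
Proof.
  intros B beta1 beta2 k1 k2 HB Hb1 Hb2 Hb1B Hb2B Hk1 Hk2.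
  assert (Hk1bound : forall x, 0 <= x <= 1 -> Rabs (k1 x) <= B * exp B).
  { intros x Hx. eapply Rle_trans; [now apply (kernel_bound beta1 k1 B) |].
    apply Rmult_le_compat_l; [lra | apply exp_le_of_le; nra]. }
  apply supnorm_le. intros x Hx.
  eapply Rle_trans; [now apply (kernel_sub_bound beta1 beta2 k1 k2 B (B * exp B)) |].
  rewrite Rmult_assoc, (Rmult_comm (exp (3 * B))).
  apply Rmult_le_compat_l; [now apply supnorm_ge0, cont01_minus |].
  apply exp_growth_le; lra.
Qed.
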